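(* Let $H$ be a $k$-linear semi-Hopf category and let $A$ be an $H$-Galois category extension of $B=A^{{\rm co}H}$. Then for all $x,y,z\in X$ the map $$\delta^x_{yz}:{\rm Hom}_k(H_{xz},A_{zy})\to{}_{B_x}{\rm Hom}(A_{xz},A_{xy}),\qquad\delta^x_{yz}(g)(a)=a_{[0]}g(a_{[1]}),$$ is bijective, with inverse $\varphi\mapsto\big(h\mapsto\sum_i l_i(h)\varphi(r_i(h))\big)$ where $\sum_i l_i(h)\otimes_{B_x}r_i(h)=({\rm can}^z_{xz})^{-1}(1_z\otimes h)$. Moreover $\delta$ is a morphism of clusters $\#(H,A)\to{}_B{\rm End}(A)^{\rm op}$, i.e. $\delta^x_{yu}(g\#g')=\delta^x_{yz}(g)\circ\delta^x_{zu}(g')$ and $\delta^x_{yy}(i^x_y)={\rm id}_{A_{xy}}$; hence $\delta$ is an isomorphism of clusters.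
   Context: Let $k$ be a commutative ring; unadorned $\otimes$ is over $k$. A $k$-linear category $A$ with class of objects $X$ consists of $k$-modules $A_{xy}$, associative compositions $A_{xy}\otimes A_{yz}\to A_{xz}$, $a\otimes b\mapsto ab$, and units $1_x\in A_{xx}$. A $k$-linear semi-Hopf category $H$ (objects $X$) is a $k$-linear category in which each $H_{xy}$ is a $k$-coalgebra with $\Delta_{xy}(h)=h_{(1)}\otimes h_{(2)}$ and counit $\varepsilon_{xy}$, such that $\Delta_{xz}(hh')=h_{(1)}h'_{(1)}\otimes h_{(2)}h'_{(2)}$, $\Delta_{xx}(1_x)=1_x\otimes1_x$, $\varepsilon_{xz}(hh')=\varepsilon_{xy}(h)\varepsilon_{yz}(h')$, $\varepsilon_{xx}(1_x)=1$. A right $H$-comodule category is a $k$-linear category $A$ with objects $X$ such that each $A_{xy}$ is a right $H_{xy}$-comodule, $\rho_{xy}(a)=a_{[0]}\otimes a_{[1]}$, with $\rho_{xz}(ab)=a_{[0]}b_{[0]}\otimes a_{[1]}b_{[1]}$ and $\rho_{xx}(1_x)=1_x\otimes1_x$. Its coinvariants are $B_x=\{a\in A_{xx}\mid\rho_{xx}(a)=a\otimes1_x\}$. $A$ is an $H$-Galois category extension of $B$ if all ${\rm can}^z_{xy}:A_{zx}\otimes_{B_x}A_{xy}\to A_{zy}\otimes H_{xy}$, $a\otimes_{B_x}a'\mapsto aa'_{[0]}\otimes a'_{[1]}$, are bijective. A $k$-linear cluster is a family $(\mathcal{C}^x)_{x\in X}$ of $k$-linear categories with object class $X$; a morphism of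 clusters is a family of $k$-linear functors that are the identity on objects. The Koppinen cluster $\mathcal{C}=\#(H,A)$ has $\mathcal{C}^x_{yz}={\rm Hom}_k(H_{xz},A_{zy})$, with multiplication, for $g\in\mathcal{C}^x_{yz}$, $g'\in\mathcal{C}^x_{zu}$, $h\in H_{xu}$: $(g\#g')(h)=g'(h_{(2)})_{[0]}\,g\big(h_{(1)}g'(h_{(2)})_{[1]}\big)$, and units $i^x_y(h)=\varepsilon_{xy}(h)1_y$. ${}_B{\rm End}(A)^{\rm op}$ is the cluster with components ${}_{B_x}{\rm Hom}(A_{xz},A_{xy})$ in position $(x;y,z)$, multiplied by composition. *)

From HB Require Import structures.
From mathcomp Require Import all_boot all_algebra.
Import GRing.Theory.
Set Implicit Arguments.
Unset Strict Implicit.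
Unset Printing Implicit Defensive.
Local Open Scope ring_scope.

(* Tensor products are represented by finite formal sums of
   pure tensors (sequences of pairs / triples).  Two formal sums are equal in
   the tensor product iff every (multi)linear map, resp. every k-bilinear
   B-balanced map, into an arbitrary k-module takes the same value on them;
   this is exactly equality in M (x)_k N, resp. M (x)_B N. *)

Section Tensors.
Variable k : comPzRingType.

Definition klinear (M P : lmodType k) (f : M -> P) : Prop :=
  forall (a : k) (u v : M), f (a *: u + v) = a *: f u + f v.

Definition bilin (M N P : lmodType k) (f : M -> N -> P) : Prop :=
  (forall n : N, klinear (fun m => f m n)) /\ (forall m : M, klinear (f m)).

Definition trilin (M N Q P : lmodType k) (f : M -> N -> Q -> P) : Prop :=
  (forall n q, klinear (fun m => f m n q)) /\
  (forall m q, klinear (fun n => f m n q)) /\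
  (forall m n, klinear (f m n)).

Definition teq2 (M N : lmodType k) (s t : seq (M * N)) : Prop :=
  forall (P : lmodType k) (f : M -> N -> P), bilin f ->
    \sum_(p <- s) f p.1 p.2 = \sum_(p <- t) f p.1 p.2.

Definition teq3 (M N Q : lmodType k) (s t : seq (M * N * Q)) : Prop :=
  forall (P : lmodType k) (f : M -> N -> Q -> P), trilin f ->
    \sum_(p <- s) f p.1.1 p.1.2 p.2 = \sum_(p <- t) f p.1.1 p.1.2 p.2.

Definition tscale (M N : lmodType k) (a : k) (s : seq (M * N)) : seq (M * N) :=
  [seq (a *: p.1, p.2) | p <- s].

Record kcat (X : Type) := KCat {
  khom : X -> X -> lmodType k;
  kcomp : forall x y z, khom x y -> khom y z -> khom x z;
  kone : forall x, khom x x;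
  compA : forall x y z w (a : khom x y) (b : khom y z) (c : khom z w),
    kcomp (kcomp a b) c = kcomp a (kcomp b c);
  comp1l : forall x y (a : khom x y), kcomp (kone x) a = a;
  comp1r : forall x y (a : khom x y), kcomp a (kone y) = a;
  comp_bilin : forall x y z, bilin (@kcomp x y z)
}.

Record semiHopfCat (X : Type) := SemiHopfCat {
  hcat :> kcat X;
  Delta : forall x y, khom hcat x y -> seq (khom hcat x y * khom hcat x y);
  eps : forall x y, khom hcat x y -> k;
  Delta_lin : forall x y (a : k) (u v : khom hcat x y),
    teq2 (Delta (a *: u + v)) (tscale a (Delta u) ++ Delta v);
  eps_lin : forall x y (a : k) (u v : khom hcat x y),
    eps (a *: u + v) = a * eps u + eps v;
  Delta_coass : forall x y (h : khom hcat x y),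
    teq3 [seq (q.1, q.2, p.2) | p <- Delta h, q <- Delta p.1]
         [seq (p.1, q.1, q.2) | p <- Delta h, q <- Delta p.2];
  Delta_counitl : forall x y (h : khom hcat x y),
    \sum_(p <- Delta h) eps p.1 *: p.2 = h;
  Delta_counitr : forall x y (h : khom hcat x y),
    \sum_(p <- Delta h) eps p.2 *: p.1 = h;
  Delta_mul : forall x y z (h : khom hcat x y) (h' : khom hcat y z),
    teq2 (Delta (kcomp h h'))
         [seq (kcomp p.1 q.1, kcomp p.2 q.2) | p <- Delta h, q <- Delta h'];
  Delta_one : forall x, teq2 (Delta (kone hcat x)) [:: (kone hcat x, kone hcat x)];
  eps_mul : forall x y z (h : khom hcat x y) (h' : khom hcat y z),
    eps (kcomp h h') = eps h * eps h';
  eps_one : forall x, eps (kone hcat x) = 1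
}.

Record comodCat (X : Type) (H : semiHopfCat X) := ComodCat {
  acat :> kcat X;
  rho : forall x y, khom acat x y -> seq (khom acat x y * khom H x y);
  rho_lin : forall x y (a : k) (u v : khom acat x y),
    teq2 (rho (a *: u + v)) (tscale a (rho u) ++ rho v);
  rho_coass : forall x y (u : khom acat x y),
    teq3 [seq (q.1, q.2, p.2) | p <- rho u, q <- rho p.1]
         [seq (p.1, q.1, q.2) | p <- rho u, q <- Delta p.2];
  rho_counit : forall x y (u : khom acat x y),
    \sum_(p <- rho u) eps p.2 *: p.1 = u;
  rho_mul : forall x y z (u : khom acat x y) (v : khom acat y z),
    teq2 (rho (kcomp u v))
         [seq (kcomp p.1 q.1, kcomp p.2 q.2) | p <- rho u, q <- rho v];
  rho_one : forall x, teq2 (rho (kone acat x)) [:: (kone acat x, kone H x)]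
}.

Section Comod.
Variables (X : Type) (H : semiHopfCat X) (A : comodCat H).

Definition coinv (x : X) (b : khom A x x) : Prop :=
  teq2 (rho b) [:: (b, kone H x)].

Definition teqB (z x y : X) (s t : seq (khom A z x * khom A x y)) : Prop :=
  forall (P : lmodType k) (f : khom A z x -> khom A x y -> P), bilin f ->
    (forall a b a', coinv b -> f (kcomp a b) a' = f a (kcomp b a')) ->
    \sum_(p <- s) f p.1 p.2 = \sum_(p <- t) f p.1 p.2.

Definition canmap (z x y : X) (s : seq (khom A z x * khom A x y))
  : seq (khom A z y * khom H x y) :=
  [seq (kcomp p.1 q.1, q.2) | p <- s, q <- rho p.2].

Definition galois : Prop :=
  forall z x y,
    (forall s t : seq (khom A z x * khom A x y),
        teq2 (canmap s) (canmap t) -> teqB s t) /\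
    (forall t : seq (khom A z y * khom H x y), exists s, teq2 (canmap s) t).

Definition BHom (x z y : X) (f : khom A x z -> khom A x y) : Prop :=
  (forall u v, f (u + v) = f u + f v) /\
  (forall b a, coinv b -> f (kcomp b a) = kcomp b (f a)).

Definition delta (x y z : X) (g : khom H x z -> khom A z y) (a : khom A x z)
  : khom A x y :=
  \sum_(p <- rho a) kcomp p.1 (g p.2).

(* the candidate inverse: h |-> sum_i l_i(h) phi(r_i(h)),
   given L h = sum_i l_i(h) (x)_{B_x} r_i(h) *)
Definition delta_inv (x y z : X) (L : khom H x z -> seq (khom A z x * khom A x z))
  (phi : khom A x z -> khom A x y) (h : khom H x z) : khom A z y :=
  \sum_(p <- L h) kcomp p.1 (phi p.2).

Definition smash (x y z u : X) (g : khom H x z -> khom A z y)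
  (g' : khom H x u -> khom A u z) (h : khom H x u) : khom A u y :=
  \sum_(p <- Delta h) \sum_(q <- rho (g' p.2)) kcomp q.1 (g (kcomp p.1 q.2)).

Definition kunit (x y : X) (h : khom H x y) : khom A y y := eps h *: kone A y.

End Comod.
End Tensors.

(* Let sum_i l_i (x) r_i = can^-1 (1 (x) h).  Applying (m, h) |-> m g(h) to
   can (sum_i l_i (x) r_i) = 1 (x) h gives sum_i l_i delta(g)(r_i) = g(h), so delta
   has the stated left inverse.  For a in A_xz, both sum a_[0] l_i(a_[1]) (x) r_i(a_[1])
   and 1 (x) a are sent by can to a_[0] (x) a_[1]; by injectivity of can they agree
   in A_xx (x)_{B_x} A_xz, and the B_x-balanced map m (x) n |-> m phi(n) turns this
   into delta(delta^-1 phi) = phi.  Injectivity of can also makes delta^-1 phi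
   k-linear.  The cluster identities are counitality and coassociativity of rho. *)

From Pilot Require Import Defs.
From HB Require Import structures.
From mathcomp Require Import all_boot all_algebra.
From Stdlib Require Import IndefiniteDescription.
Import GRing.Theory.
Set Implicit Arguments.
Unset Strict Implicit.
Unset Printing Implicit Defensive.
Local Open Scope ring_scope.

Section KLinear.
Variable k : comPzRingType.
Implicit Types M N P : lmodType k.

Lemma klinD M P (f : M -> P) : klinear f -> forall u v, f (u + v) = f u + f v.
Proof. by move=> hf u v; have := hf 1 u v; rewrite !scale1r. Qed.

Lemma klin0 M P (f : M -> P) : klinear f -> f 0 = 0.
Proof.
move=> hf; have := klinD hf 0 0; rewrite addr0 => /(congr1 (fun w => w - f 0)).
by rewrite addrK subrr => ->.
Qed.

Lemma klinZ M P (f : M -> P) : klinear f -> forall a u, f (a *: u) = a *: f u.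
Proof. by move=> hf a u; rewrite -[a *: u]addr0 hf klin0 // addr0. Qed.

Lemma klin_sum M P (f : M -> P) I (s : seq I) (F : I -> M) : klinear f ->
  f (\sum_(i <- s) F i) = \sum_(i <- s) f (F i).
Proof.
move=> hf; elim: s => [|i s IH]; first by rewrite !big_nil klin0.
by rewrite !big_cons klinD // IH.
Qed.

Lemma klinear_sum M P I (s : seq I) (F : I -> M -> P) :
  (forall i, klinear (F i)) -> klinear (fun u => \sum_(i <- s) F i u).
Proof.
move=> hF a u v; rewrite scaler_sumr -big_split /=.
by apply: eq_bigr => i _; rewrite hF.
Qed.

Lemma klinear_comp M N P (f : N -> P) (g : M -> N) :
  klinear f -> klinear g -> klinear (fun u => f (g u)).
Proof. by move=> hf hg a u v; rewrite hg hf. Qed.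

Lemma bilin_sum M N P I (s : seq I) (F : I -> M -> N -> P) :
  (forall i, bilin (F i)) -> bilin (fun m n => \sum_(i <- s) F i m n).
Proof.
move=> hF; split.
  by move=> n; apply: klinear_sum => i; exact: (hF i).1.
by move=> m; apply: klinear_sum => i; exact: (hF i).2.
Qed.

Lemma sum_tscale M N P (f : M -> N -> P) a (s : seq (M * N)) :
  bilin f -> \sum_(p <- tscale a s) f p.1 p.2 = a *: \sum_(p <- s) f p.1 p.2.
Proof.
move=> hf; rewrite /tscale big_map scaler_sumr; apply: eq_bigr => p _ /=.
by rewrite (klinZ (hf.1 _)).
Qed.

Lemma klinear_teq2_sum M N (V : lmodType k) (T : V -> seq (M * N)) :
  (forall a u v, teq2 (T (a *: u + v)) (tscale a (T u) ++ T v)) ->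
  forall P (f : M -> N -> P), bilin f ->
    klinear (fun u => \sum_(p <- T u) f p.1 p.2).
Proof.
move=> hT P f hf a u v /=.
by rewrite (hT a u v P f hf) big_cat /= sum_tscale.
Qed.

End KLinear.

Section KCat.
Variables (k : comPzRingType) (X : Type) (C : kcat k X).

Lemma kcompL_klinear x y z (c : khom C y z) :
  klinear (fun m : khom C x y => kcomp m c).
Proof. exact: (comp_bilin C x y z).1. Qed.

Lemma kcompR_klinear x y z (m : khom C x y) :
  klinear (fun c : khom C y z => kcomp m c).
Proof. exact: (comp_bilin C x y z).2. Qed.

Lemma kcompZl x y z (a : k) (m : khom C x y) (c : khom C y z) :
  kcomp (a *: m) c = a *: kcomp m c.
Proof. exact: (klinZ (kcompL_klinear c)). Qed.

Lemma kcomp_sumr x y z I (s : seq I) (m : khom C x y) (F : I -> khom C y z) :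
  kcomp m (\sum_(i <- s) F i) = \sum_(i <- s) kcomp m (F i).
Proof. exact: (klin_sum _ _ (kcompR_klinear m)). Qed.

Lemma bilin_kcomp w x y (N : lmodType k) (f : N -> khom C x y) :
  klinear f -> bilin (fun (m : khom C w x) n => kcomp m (f n)).
Proof.
move=> hf; split; first by move=> n; exact: kcompL_klinear.
by move=> m; apply: klinear_comp hf; exact: kcompR_klinear.
Qed.

End KCat.

Section Comodule.
Variables (k : comPzRingType) (X : Type) (H : semiHopfCat k X) (A : comodCat H).
Implicit Types P : lmodType k.

Lemma klinear_rho_sum x y P (f : khom A x y -> khom H x y -> P) :
  bilin f -> klinear (fun u => \sum_(p <- rho u) f p.1 p.2).
Proof. by apply: klinear_teq2_sum; exact: rho_lin. Qed.

Lemma rho_sum_kcomp x y z P (f : khom A x z -> khom H x z -> P)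
  (u : khom A x y) (v : khom A y z) : bilin f ->
  \sum_(p <- rho (kcomp u v)) f p.1 p.2 =
  \sum_(p <- rho u) \sum_(q <- rho v) f (kcomp p.1 q.1) (kcomp p.2 q.2).
Proof. by move=> hf; rewrite (rho_mul _ _ hf) big_allpairs_dep. Qed.

Lemma coinv_sum x P (f : khom A x x -> khom H x x -> P) b : coinv b -> bilin f ->
  \sum_(p <- rho b) f p.1 p.2 = f b (kone H x).
Proof. by move=> hb hf; rewrite (hb _ _ hf) big_seq1. Qed.

Lemma coinv_scale_kone x (c : k) : coinv (c *: kone A x).
Proof.
move=> P f hf; rewrite big_seq1 /= (klinZ (klinear_rho_sum hf)).
by rewrite (rho_one hf) big_seq1 (klinZ (hf.1 _)).
Qed.

(* Scalars act through the coinvariants c 1_x, so B_x-linearity implies k-linearity. *)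
Lemma BHom_klinear x z y (phi : khom A x z -> khom A x y) : BHom phi -> klinear phi.
Proof.
case=> phiD phiB c u v; rewrite phiD; congr (_ + _).
have -> : c *: u = kcomp (c *: kone A x) u by rewrite kcompZl comp1l.
by rewrite phiB ?kcompZl ?comp1l //; exact: coinv_scale_kone.
Qed.

Lemma teqB_sum_BHom w x z y (phi : khom A x z -> khom A x y)
  (s t : seq (khom A w x * khom A x z)) :
  BHom phi -> teqB s t ->
  \sum_(p <- s) kcomp p.1 (phi p.2) = \sum_(p <- t) kcomp p.1 (phi p.2).
Proof.
move=> hphi /(_ _ (fun m n => kcomp m (phi n))); apply.
  exact: bilin_kcomp (BHom_klinear hphi).
by move=> a b a' hb; rewrite hphi.2 // Defs.compA.
Qed.

Lemma delta_BHom x y z (g : khom H x z -> khom A z y) :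
  klinear g -> BHom (delta g).
Proof.
move=> hg; split.
  by move=> u v; rewrite /delta (klinD (klinear_rho_sum (bilin_kcomp _ hg))).
move=> b a hb; rewrite /delta (rho_sum_kcomp _ _ (bilin_kcomp _ hg)).
have hF : bilin (fun (m : khom A x x) (h : khom H x x) =>
   \sum_(q <- rho a) kcomp (kcomp m q.1) (g (kcomp h q.2))).
  apply: bilin_sum => q; split => [n|m].
    by apply: (klinear_comp (kcompL_klinear _)); exact: kcompL_klinear.
  apply: (klinear_comp (kcompR_klinear _)).
  by apply: (klinear_comp hg); exact: kcompL_klinear.
rewrite (coinv_sum hb hF) kcomp_sumr.
by apply: eq_bigr => q _; rewrite comp1l Defs.compA.
Qed.

Lemma delta_kunit x y (a : khom A x y) : delta (@kunit _ _ _ A x y) a = a.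
Proof.
rewrite /delta /kunit -[RHS](rho_counit a); apply: eq_bigr => p _.
by rewrite (klinZ (kcompR_klinear _)) comp1r.
Qed.

Lemma delta_smash x y z u (g : khom H x z -> khom A z y)
  (g' : khom H x u -> khom A u z) : klinear g -> klinear g' ->
  forall a, delta (smash g g') a = delta g (delta g' a).
Proof.
move=> hg hg' a.
pose F (m : khom A x u) (h1 h2 : khom H x u) :=
  \sum_(q <- rho (g' h2)) kcomp m (kcomp q.1 (g (kcomp h1 q.2))).
have hF : trilin F.
  split; last split.
  - by move=> n q; apply: klinear_sum => s; exact: kcompL_klinear.
  - move=> m q; apply: klinear_sum => s.
    apply: (klinear_comp (kcompR_klinear _)); apply: (klinear_comp (kcompR_klinear _)).
    by apply: (klinear_comp hg); exact: kcompL_klinear.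
  - move=> m h1.
    have hmh1 : bilin (fun (n : khom A u z) (h : khom H u z) =>
                  kcomp m (kcomp n (g (kcomp h1 h)))).
      split=> [h|n].
        by apply: (klinear_comp (kcompR_klinear _)); exact: kcompL_klinear.
      apply: (klinear_comp (kcompR_klinear _)); apply: (klinear_comp (kcompR_klinear _)).
      by apply: (klinear_comp hg); exact: kcompR_klinear.
    exact: (klinear_comp (klinear_rho_sum hmh1) hg').
have coass := rho_coass a hF; rewrite !big_allpairs_dep /= in coass.
transitivity (\sum_(p <- rho a) \sum_(r <- Delta p.2) F p.1 r.1 r.2).
  rewrite /delta; apply: eq_bigr => p _; rewrite /smash kcomp_sumr.
  by apply: eq_bigr => r _; rewrite kcomp_sumr.
rewrite -coass /delta (klin_sum _ _ (klinear_rho_sum (bilin_kcomp _ hg))).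
apply: eq_bigr => p _; rewrite (rho_sum_kcomp _ _ (bilin_kcomp _ hg)).
by apply: eq_bigr => q _; apply: eq_bigr => s _; rewrite Defs.compA.
Qed.

Lemma canmap_sum z x y P (F : khom A z y -> khom H x y -> P) s :
  \sum_(p <- canmap s) F p.1 p.2 =
  \sum_(p <- s) \sum_(q <- rho p.2) F (kcomp p.1 q.1) q.2.
Proof. by rewrite /canmap big_allpairs_dep. Qed.

Lemma canmap_tscale_cat z x y P (F : khom A z y -> khom H x y -> P) c s t :
  bilin F -> \sum_(p <- canmap (tscale c s ++ t)) F p.1 p.2 =
  c *: \sum_(p <- canmap s) F p.1 p.2 + \sum_(p <- canmap t) F p.1 p.2.
Proof.
move=> hF; rewrite !canmap_sum big_cat /tscale big_map scaler_sumr.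
congr (_ + _); apply: eq_bigr => p _; rewrite scaler_sumr.
by apply: eq_bigr => q _; rewrite kcompZl (klinZ (hF.1 _)).
Qed.

Section CanInverse.
Variables (x z : X) (L : khom H x z -> seq (khom A z x * khom A x z)).
Hypothesis can_L : forall h, teq2 (canmap (L h)) [:: (kone A z, h)].

Lemma deltaK y (g : khom H x z -> khom A z y) :
  klinear g -> forall h, delta_inv L (delta g) h = g h.
Proof.
move=> hg h; have := can_L h (bilin_kcomp _ hg).
rewrite (canmap_sum (fun m h => kcomp m (g h))) big_seq1 /= comp1l => <-.
rewrite /delta_inv; apply: eq_bigr => p _; rewrite /delta kcomp_sumr.
by apply: eq_bigr => q _; rewrite Defs.compA.
Qed.

Lemma delta_inj y (g g' : khom H x z -> khom A z y) :
  klinear g -> klinear g' -> (forall a, delta g a = delta g' a) ->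
  forall h, g h = g' h.
Proof.
move=> hg hg' eq_delta h; rewrite -(deltaK hg) -(deltaK hg').
by apply: eq_bigr => p _; rewrite eq_delta.
Qed.

Hypothesis gal : galois A.

Lemma klinear_delta_inv y (phi : khom A x z -> khom A x y) :
  BHom phi -> klinear (delta_inv L phi).
Proof.
move=> hphi c u v; rewrite /delta_inv.
have LZD : teqB (L (c *: u + v)) (tscale c (L u) ++ L v).
  apply: (gal z x z).1 => P F hF.
  rewrite canmap_tscale_cat // (can_L _ hF) (can_L u hF) (can_L v hF).
  by rewrite !big_seq1 /= hF.2.
rewrite (teqB_sum_BHom hphi LZD) big_cat.
by rewrite (sum_tscale _ _ (bilin_kcomp _ (BHom_klinear hphi))).
Qed.

Lemma delta_inv_teqB (a : khom A x z) :
  teqB [seq (kcomp p.1 r.1, r.2) | p <- rho a, r <- L p.2] [:: (kone A x, a)].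
Proof.
apply: (gal x x z).1 => P F hF.
rewrite canmap_sum big_allpairs_dep !canmap_sum big_seq1 /=.
apply: eq_bigr => p _.
have hFp : bilin (fun (m : khom A z z) (h : khom H x z) => F (kcomp p.1 m) h).
  split=> [n|m]; last exact: hF.2.
  by apply: (klinear_comp (hF.1 n)); exact: kcompR_klinear.
have := can_L p.2 hFp.
rewrite (canmap_sum (fun m h => F (kcomp p.1 m) h)) big_seq1 /= comp1r comp1l => <-.
by apply: eq_bigr => r _; apply: eq_bigr => q _; rewrite Defs.compA.
Qed.

Lemma delta_invK y (phi : khom A x z -> khom A x y) :
  BHom phi -> forall a, delta (delta_inv L phi) a = phi a.
Proof.
move=> hphi a; have := teqB_sum_BHom hphi (delta_inv_teqB a).
rewrite big_allpairs_dep big_seq1 /= comp1l => <-.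
rewrite /delta /delta_inv; apply: eq_bigr => p _; rewrite kcomp_sumr.
by apply: eq_bigr => r _; rewrite Defs.compA.
Qed.

End CanInverse.

Lemma galois_can_section (gal : galois A) x z :
  exists L : khom H x z -> seq (khom A z x * khom A x z),
    forall h, teq2 (canmap (L h)) [:: (kone A z, h)].
Proof. exact: functional_choice (fun h => (gal z x z).2 [:: (kone A z, h)]). Qed.

End Comodule.

Theorem proposition7p2 (k : comPzRingType) (X : Type) (H : semiHopfCat k X)
  (A : comodCat H) :
  galois A ->
  (forall x y z : X,
    (forall g : khom H x z -> khom A z y, klinear g -> BHom (delta g)) /\
    (forall g g' : khom H x z -> khom A z y, klinear g -> klinear g' ->
       (forall a, delta g a = delta g' a) -> forall h, g h = g' h) /\
    (forall phi : khom A x z -> khom A x y, BHom phi ->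
       exists g : khom H x z -> khom A z y,
         klinear g /\ forall a, delta g a = phi a) /\
    (forall L : khom H x z -> seq (khom A z x * khom A x z),
       (forall h, teq2 (canmap (L h)) [:: (kone A z, h)]) ->
       (forall phi : khom A x z -> khom A x y, BHom phi ->
          klinear (delta_inv L phi) /\
          forall a, delta (delta_inv L phi) a = phi a) /\
       (forall g : khom H x z -> khom A z y, klinear g ->
          forall h, delta_inv L (delta g) h = g h))) /\
  (forall (x y z u : X) (g : khom H x z -> khom A z y)
          (g' : khom H x u -> khom A u z),
     klinear g -> klinear g' ->
     forall a, delta (smash g g') a = delta g (delta g' a)) /\
  (forall (x y : X) (a : khom A x y), delta (@kunit _ _ _ A x y) a = a).
Proof.
move=> gal; split; last split; last exact: delta_kunit.
- move=> x y z; have [L can_L] := galois_can_section gal x z.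
  split; first by move=> g; exact: delta_BHom.
  split; first exact: (delta_inj can_L).
  split.
    move=> phi hphi; exists (delta_inv L phi).
    by split; [exact: klinear_delta_inv | exact: delta_invK].
  move=> L' can_L'; split; last exact: deltaK.
  by move=> phi hphi; split; [exact: klinear_delta_inv | exact: delta_invK].
- by move=> x y z u g g' hg hg'; exact: delta_smash.
Qed.
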